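(* Let $d\in\{1,2,3\}$ and let $G$ be a graph with a nonedge $f=uv$. Suppose there is an induced minor model $\{B_x\}$ of a $d$-forbidden graph in $G\cup f$ such that $u\in B_a$, $v\in B_b$ with $a\ne b$ and $f$ is the only edge of $G\cup f$ joining $B_a$ and $B_b$. Then $(G,f)$ does not have the $d$-SIP.
   Context: A linkage $(G,\ell)$: finite simple graph $G$ and $\ell:E(G)\to\mathbb{R}_{\ge0}$ (squared lengths). A $d$-realization is $p:V(G)\to\mathbb{R}^d$ with $\|p(x)-p(y)\|^2=\ell(xy)$ for all $xy\in E(G)$; $\mathcal{C}^d(G,\ell)$ is the set of these. For a nonedge $f=uv$, $\Omega^d_f(G,\ell)=\{\|p(u)-p(v)\|^2:p\in\mathcal{C}^d(G,\ell)\}$; $(G,f)$ has the $d$-SIP if $\Omega^d_f(G,\ell)$ is convex (empty or a closed interval) for every $\ell$. $G\cup f$ adds $f$ as an edge. An induced minor model of $M$ in $H$ is a partition $\{B_x\}_{x\in V(M)}$ of $V(H)$ into nonempty sets each inducing a connected subgraph such that $xy\in E(M)$ iff some edge of $H$ joins $B_x$ and $B_y$. The $d$-forbidden graphs are $K_3$ for $d=1$, $K_4$ for $d=2$, and $K_5$ and $K_{2,2,2}$ for $d=3$. *)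

From HB Require Import structures.
From mathcomp Require Import all_boot all_order all_algebra.
From mathcomp Require Import reals.
Set Implicit Arguments. Unset Strict Implicit. Unset Printing Implicit Defensive.
Import Order.TTheory GRing.Theory Num.Theory.
Local Open Scope ring_scope.

Section Defs.
Variable R : realType.

Definition sqdist (d : nat) (x y : 'rV[R]_d) : R :=
  \sum_(i < d) (x 0 i - y 0 i) ^+ 2.

Variable T : finType.

Definition realization (d : nat) (e : rel T) (l : T -> T -> R)
    (p : T -> 'rV[R]_d) : Prop :=
  forall x y, e x y -> sqdist (p x) (p y) = l x y.

Definition Omega (d : nat) (e : rel T) (l : T -> T -> R) (u v : T) (r : R) : Prop :=
  exists p : T -> 'rV[R]_d, realization e l p /\ r = sqdist (p u) (p v).

Definition convex_set (S : R -> Prop) : Prop :=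
  forall r1 r2 r, S r1 -> S r2 -> r1 <= r -> r <= r2 -> S r.

(* (G, f) has the d-SIP: Omega is convex for every squared-length assignment
   l : E(G) -> R_{>=0} (represented as a function symmetric and nonnegative
   on edges; its values on nonedges are irrelevant). *)
Definition has_SIP (d : nat) (e : rel T) (u v : T) : Prop :=
  forall l : T -> T -> R,
    (forall x y, e x y -> 0 <= l x y) ->
    (forall x y, e x y -> l x y = l y x) ->
    convex_set (Omega d e l u v).
End Defs.

Definition add_edge (T : eqType) (e : rel T) (u v : T) : rel T :=
  fun x y => [|| e x y, (x == u) && (y == v) | (x == v) && (y == u)].

Definition induced_connected (T : finType) (e : rel T) (A : {set T}) : Prop :=
  forall a b, a \in A -> b \in A ->
    connect (fun x y => [&& e x y, x \in A & y \in A]) a b.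

Definition induced_minor_model (S T : finType) (eM : rel S) (e : rel T)
    (B : S -> {set T}) : Prop :=
  [/\ (forall x, B x != set0),
      (forall x y, x != y -> [disjoint B x & B y]),
      (forall t : T, exists x, t \in B x),
      (forall x, induced_connected e (B x)) &
      (forall x y, x != y ->
         (eM x y <-> exists s t, [/\ s \in B x, t \in B y & e s t]))].

(* (n, eM) is (a labelled copy of) a d-forbidden graph:
   K_3 (d=1), K_4 (d=2), K_5 or K_{2,2,2} (d=3). *)
Definition d_forbidden (d n : nat) (eM : rel 'I_n) : Prop :=
  [\/ [/\ d = 1%N, n = 3%N & forall i j, eM i j = (i != j)],
      [/\ d = 2%N, n = 4%N & forall i j, eM i j = (i != j)],
      [/\ d = 3%N, n = 5%N & forall i j, eM i j = (i != j)] |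
      [/\ d = 3%N, n = 6%N &
          forall i j, eM i j = (i != j) && ((i %/ 2)%N != (j %/ 2)%N)]].

(* Put M - ab in R^d with a and b both at the unit vector e_j and every other
   vertex in the hyperplane x_j = 0; reflecting b in that hyperplane keeps the
   edge lengths of M - ab and moves |a - b|^2 from 0 to 4.  Give each edge of G
   the squared length of the M-edge joining the blocks of its ends (0 inside a
   block).  Realizations of M - ab with these lengths lift to realizations of
   G, and conversely a realization of G is constant on the connected blocks
   (f being the only edge between B_a and B_b), so it descends to M - ab.
   Hence 0 and 4 lie in Omega_f but 1 does not: seen from the apex c, b and
   d - 1 further vertices form an orthonormal frame of R^d to which a is a unit
   vector orthogonal except for b, so a - c = +-(b - c).  For the octahedron the
   frame is b, the partner of b (forced antipodal to the partner of a about c)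
   and the vertex of the third pair other than c. *)

From HB Require Import structures.
From mathcomp Require Import all_boot all_order all_algebra.
From mathcomp Require Import reals.
From mathcomp Require Import ring lra zify.
Set Implicit Arguments. Unset Strict Implicit. Unset Printing Implicit Defensive.
Import Order.TTheory GRing.Theory Num.Theory.
Local Open Scope ring_scope.

Section EuclideanGeometry.
Variable R : realType.
Implicit Types (d : nat).

Definition dotv d (x y : 'rV[R]_d) : R := \sum_i x 0 i * y 0 i.

Lemma sqdistC d (x y : 'rV[R]_d) : sqdist x y = sqdist y x.
Proof. by apply: eq_bigr => i _; rewrite -opprB sqrrN. Qed.

Lemma sqdistxx d (x : 'rV[R]_d) : sqdist x x = 0.
Proof. by apply: big1 => i _; rewrite subrr expr0n. Qed.

Lemma sqdist_ge0 d (x y : 'rV[R]_d) : 0 <= sqdist x y.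
Proof. by apply: sumr_ge0 => i _; exact: sqr_ge0. Qed.

Lemma sqdist_eq0 d (x y : 'rV[R]_d) : sqdist x y = 0 -> x = y.
Proof.
move=> /psumr_eq0P xy; apply/rowP => i.
by apply/eqP; rewrite -subr_eq0 -sqrf_eq0 xy // => j _; exact: sqr_ge0.
Qed.

Lemma sqdist_dotv d (x y : 'rV[R]_d) : sqdist x y = dotv (x - y) (x - y).
Proof. by apply: eq_bigr => i _; rewrite !mxE expr2. Qed.

Lemma dotv_polar d (c x y : 'rV[R]_d) :
  2 * dotv (x - c) (y - c) = sqdist x c + sqdist y c - sqdist x y.
Proof.
rewrite /dotv /sqdist mulr_sumr -big_split -sumrB /=.
by apply: eq_bigr => i _; rewrite !mxE; ring.
Qed.

Lemma dotvBZl d (x y z : 'rV[R]_d) (s : R) :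
  dotv (x - s *: y) z = dotv x z - s * dotv y z.
Proof.
rewrite /dotv mulr_sumr -sumrB.
by apply: eq_bigr => i _; rewrite !mxE; ring.
Qed.

Lemma dotvZ d (x y : 'rV[R]_d) (s t : R) :
  dotv (s *: x) (t *: y) = s * t * dotv x y.
Proof.
rewrite /dotv mulr_sumr.
by apply: eq_bigr => i _; rewrite !mxE; ring.
Qed.

Lemma apollonius d (x y z : 'rV[R]_d) :
  4 * sqdist z (2^-1 *: (x + y)) = 2 * sqdist z x + 2 * sqdist z y - sqdist x y.
Proof.
rewrite /sqdist !mulr_sumr -big_split -sumrB /=.
by apply: eq_bigr => i _; rewrite !mxE; field.
Qed.

Lemma orthonormal_complete n (f : 'I_n -> 'rV[R]_n) (w : 'rV[R]_n) :
  (forall i j, dotv (f i) (f j) = (i == j)%:R) ->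
  (forall i, dotv w (f i) = 0) -> w = 0.
Proof.
move=> fON wf; pose F := \matrix_i f i.
have FFt : F *m F^T = 1%:M.
  apply/matrixP => i j; rewrite !mxE -fON /dotv.
  by apply: eq_bigr => k _; rewrite !mxE.
have wFt : w *m F^T = 0.
  apply/matrixP => i j; rewrite !mxE (ord1 i) -[RHS](wf j) /dotv.
  by apply: eq_bigr => k _; rewrite !mxE.
by rewrite -[w]mulmx1 -(mulmx1C FFt) mulmxA wFt mul0mx.
Qed.

Lemma sqdist_frame_rigid n (c x : 'rV[R]_n) (p : 'I_n -> 'rV[R]_n) (i0 : 'I_n) :
  sqdist x c = 1 -> (forall i, sqdist (p i) c = 1) ->
  (forall i j, i != j -> sqdist (p i) (p j) = 2) ->
  (forall i, i != i0 -> sqdist x (p i) = 2) ->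
  sqdist x (p i0) != 1.
Proof.
move=> xc pc pp xp; apply/eqP => xp0.
pose f i := p i - c; pose t := dotv (x - c) (f i0).
have fON i j : dotv (f i) (f j) = (i == j)%:R.
  have := dotv_polar c (p i) (p j); rewrite !pc.
  by have [<-|/pp ->] := eqVneq i j; rewrite ?sqdistxx /=; lra.
have xf i : i != i0 -> dotv (x - c) (f i) = 0.
  by move=> /xp xpi; have := dotv_polar c x (p i); rewrite xc pc xpi; lra.
have t_half : 2 * t = 1 by rewrite /t dotv_polar xc pc xp0; lra.
have x_on_line : x - c - t *: f i0 = 0.
  apply: (orthonormal_complete fON) => i; rewrite dotvBZl fON.
  by have [->|/xf ->] := eqVneq i i0; rewrite /t /=; lra.
have : sqdist x c = t * t.
  by rewrite sqdist_dotv -[x - c]subr0 -x_on_line opprB addrC subrK dotvZ fON eqxx mulr1.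
rewrite xc; nra.
Qed.

Lemma sqdist_antipodal d (c y y' z : 'rV[R]_d) :
  sqdist y c = 1 -> sqdist y' c = 1 -> sqdist y y' = 4 ->
  sqdist z y + sqdist z y' = 2 * sqdist z c + 2.
Proof.
move=> yc y'c yy'.
have mid : c = 2^-1 *: (y + y').
  apply: sqdist_eq0; have := apollonius y y' c.
  by rewrite !(sqdistC c) yc y'c yy'; lra.
by have := apollonius y y' z; rewrite -mid yy'; lra.
Qed.

Lemma sqdist_e0 d (i : 'I_d) : sqdist ('e_i : 'rV[R]_d) 0 = 1.
Proof.
rewrite /sqdist (bigD1 i) //= big1 => [|k ki]; rewrite !mxE ?eqxx ?(negbTE ki) /=.
  by rewrite subr0 expr1n addr0.
by rewrite subrr expr0n.
Qed.

Lemma sqdist_ee d (i j : 'I_d) : i != j -> sqdist ('e_i : 'rV[R]_d) 'e_j = 2.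
Proof.
move=> ij; rewrite /sqdist (bigD1 i) // (bigD1 j) 1?eq_sym //= big1 ?addr0.
  by rewrite !mxE !eqxx (negbTE ij) eq_sym (negbTE ij) /=; lra.
by move=> k /andP[ki kj]; rewrite !mxE (negbTE ki) (negbTE kj) subrr expr0n.
Qed.

Lemma sqdist_Ne d (j : 'I_d) (w : 'rV[R]_d) :
  w 0 j = 0 -> sqdist (- 'e_j) w = sqdist 'e_j w.
Proof.
move=> wj; apply: eq_bigr => k _; rewrite !mxE eqxx /=.
by have [->|_] := eqVneq k j; rewrite ?wj /=; lra.
Qed.

Lemma sqdist_Nee d (j : 'I_d) : sqdist (- 'e_j : 'rV[R]_d) 'e_j = 4.
Proof.
by rewrite /sqdist (bigD1 j) //= big1 => [|k kj]; rewrite !mxE ?eqxx ?(negbTE kj) /=; lra.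
Qed.

Lemma octahedron_rigid (qa qb qa' qb' qc qc' : 'rV[R]_3) :
  sqdist qa qc = 1 -> sqdist qb qc = 1 -> sqdist qa' qc = 1 -> sqdist qb' qc = 1 ->
  sqdist qa' qb' = 4 -> sqdist qa qb' = 2 -> sqdist qa' qb = 2 ->
  sqdist qa qc' = 2 -> sqdist qb qc' = 2 -> sqdist qa' qc' = 2 -> sqdist qb' qc' = 2 ->
  sqdist qa qb != 1.
Proof.
move=> ac bc a'c b'c a'b' ab' a'b ac' bc' a'c' b'c'.
have c'c : sqdist qc' qc = 1.
  by have := sqdist_antipodal qc' a'c b'c a'b'; rewrite !(sqdistC qc') a'c' b'c'; lra.
have bb' : sqdist qb qb' = 2.
  by have := sqdist_antipodal qb a'c b'c a'b'; rewrite sqdistC a'b bc; lra.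
pose p (i : 'I_3) := nth 0 [:: qb; qc'; qb'] i.
have -> : qb = p ord0 by [].
apply: (sqdist_frame_rigid (c := qc)) => //.
- by case=> [[|[|[|//]]] ?].
- by move=> [[|[|[|//]]] ?] [[|[|[|//]]] ?] //= _; rewrite sqdistC.
- by case=> [[|[|[|//]]] ?].
Qed.

End EuclideanGeometry.

Definition del_edge (I : eqType) (E : rel I) (a b : I) : rel I :=
  fun x y => E x y && ~~ [|| (x == a) && (y == b) | (x == b) && (y == a)].

Definition congruent_on (R : realType) (I : Type) d (E : rel I)
    (q q' : I -> 'rV[R]_d) : Prop :=
  forall x y, E x y -> sqdist (q x) (q y) = sqdist (q' x) (q' y).

Lemma connect_constant (T : finType) (r : rel T) (A : Type) (f : T -> A) s t :
  (forall x y, r x y -> f x = f y) -> connect r s t -> f s = f t.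
Proof.
move=> rf /connectP [p + ->]; elim: p s => //= y p IHp s /andP[/rf -> ].
exact: IHp.
Qed.

Section HingeReduction.
Variables (R : realType) (d : nat) (T : finType) (e : rel T) (u v : T).
Variables (n : nat) (eM : rel 'I_n) (B : 'I_n -> {set T}) (a b : 'I_n).
Hypotheses (e_sym : symmetric e) (uv_nonedge : ~~ e u v).
Hypothesis model : induced_minor_model eM (add_edge e u v) B.
Hypotheses (u_in : u \in B a) (v_in : v \in B b) (ab : a != b).
Hypothesis f_only : forall x y, x \in B a -> y \in B b ->
  add_edge e u v x y -> (x == u) && (y == v).

Definition block_of (t : T) : 'I_n := odflt a [pick x | t \in B x].

Lemma mem_block_of t : t \in B (block_of t).
Proof.
case: model => _ _ cover _ _; rewrite /block_of; case: pickP => [x //|none].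
by have [x tx] := cover t; move: (none x); rewrite tx.
Qed.

Lemma block_ofE t x : t \in B x -> block_of t = x.
Proof.
case: model => _ disj _ _ _ tx; apply/eqP; apply: contraT => neq.
by move: (disjointFr (disj _ _ neq) (mem_block_of t)); rewrite tx.
Qed.

Lemma edge_of_add_edge s t : add_edge e u v s t ->
  ~~ [|| (block_of s == a) && (block_of t == b) | (block_of s == b) && (block_of t == a)] -> e s t.
Proof.
rewrite /add_edge.
by case/or3P => [//| /andP[/eqP-> /eqP->] | /andP[/eqP-> /eqP->]];
  rewrite (block_ofE u_in) (block_ofE v_in) !eqxx ?orbT.
Qed.

Lemma edge_between_blocks s t : e s t -> block_of s != block_of t ->
  del_edge eM a b (block_of s) (block_of t).
Proof.
case: model => _ _ _ _ edges est neq; apply/andP; split.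
  by apply/(edges _ _ neq); exists s, t; rewrite !mem_block_of /add_edge est.
apply/negP => /orP[] /andP[/eqP sa /eqP tb].
  have := @f_only s t; rewrite -sa -tb !mem_block_of /add_edge est.
  by case/(_ isT isT isT)/andP => /eqP su /eqP tv; move: est; rewrite su tv (negbTE uv_nonedge).
have := @f_only t s; rewrite -sa -tb !mem_block_of /add_edge e_sym est.
by case/(_ isT isT isT)/andP => /eqP tu /eqP sv; move: est; rewrite tu sv e_sym (negbTE uv_nonedge).
Qed.

Variable q1 : 'I_n -> 'rV[R]_d.

Definition block_length (s t : T) : R := sqdist (q1 (block_of s)) (q1 (block_of t)).

Lemma realization_of_congruent (q : 'I_n -> 'rV[R]_d) :
  congruent_on (del_edge eM a b) q q1 -> realization e block_length (q \o block_of).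
Proof.
move=> qq1 s t est; rewrite /block_length /=.
have [-> | neq] := eqVneq (block_of s) (block_of t); first by rewrite !sqdistxx.
exact/qq1/edge_between_blocks.
Qed.

Lemma realization_constant_on_blocks (p : T -> 'rV[R]_d) : realization e block_length p ->
  forall x s t, s \in B x -> t \in B x -> p s = p t.
Proof.
case: model => _ _ _ conn _ preal x s t sx tx.
apply: connect_constant (conn x s t sx tx) => y z /and3P[yz yx zx].
have e_yz : e y z.
  apply: (edge_of_add_edge yz); rewrite (block_ofE yx) (block_ofE zx).
  by apply/negP => /orP[] /andP[/eqP-> /eqP xb]; move: ab; rewrite xb eqxx.
by apply: sqdist_eq0; rewrite preal // /block_length (block_ofE yx) (block_ofE zx) sqdistxx.
Qed.

Lemma congruent_of_realization (p : T -> 'rV[R]_d) : realization e block_length p ->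
  exists2 q, congruent_on (del_edge eM a b) q q1 & forall t, p t = q (block_of t).
Proof.
move=> preal; pose q x := p (odflt u [pick t in B x]).
have pq t : p t = q (block_of t).
  rewrite /q; case: pickP => [t' t'B /= | none]; last by move: (none t); rewrite mem_block_of.
  exact: realization_constant_on_blocks (mem_block_of t) t'B.
exists q => // x y /andP[eMxy not_ab].
have [<- | xy] := eqVneq x y; first by rewrite !sqdistxx.
case: model => _ _ _ _ edges.
have [s [t [sx ty st]]] := (edges _ _ xy).1 eMxy.
rewrite -(block_ofE sx) -(block_ofE ty) -!pq preal //.
by apply: edge_of_add_edge; rewrite ?(block_ofE sx) ?(block_ofE ty).
Qed.

Lemma not_SIP_of_gap (q2 : 'I_n -> 'rV[R]_d) (r : R) :
  congruent_on (del_edge eM a b) q2 q1 ->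
  sqdist (q1 a) (q1 b) <= r -> r <= sqdist (q2 a) (q2 b) ->
  (forall q, congruent_on (del_edge eM a b) q q1 -> sqdist (q a) (q b) != r) ->
  ~ has_SIP R d e u v.
Proof.
move=> q2q1 r1r rr2 gap SIP.
have in_Omega q : congruent_on (del_edge eM a b) q q1 ->
    Omega d e block_length u v (sqdist (q a) (q b)).
  move=> qq1; exists (q \o block_of); split; first exact: realization_of_congruent.
  by rewrite /= (block_ofE u_in) (block_ofE v_in).
have := SIP block_length (fun _ _ _ => sqdist_ge0 _ _) (fun _ _ _ => sqdistC _ _).
move=> /(_ _ _ r (in_Omega q1 (fun _ _ _ => erefl)) (in_Omega q2 q2q1) r1r rr2).
case=> p [/congruent_of_realization [q qq1 pq] rE].
by move: (gap q qq1); rewrite rE !pq (block_ofE u_in) (block_ofE v_in) eqxx.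
Qed.

Lemma not_SIP_of_flip (j : 'I_d) :
  q1 a = 'e_j -> q1 b = 'e_j -> (forall x, x != a -> x != b -> q1 x 0 j = 0) ->
  (forall q, congruent_on (del_edge eM a b) q q1 -> sqdist (q a) (q b) != 1) ->
  ~ has_SIP R d e u v.
Proof.
move=> q1a q1b q1x rigid.
pose q2 x := if x == b then - 'e_j else q1 x.
apply: (@not_SIP_of_gap q2 1 _ _ _ rigid).
- move=> x y /andP[_]; rewrite /q2.
  have [-> | xb] := eqVneq x b; have [-> | yb] := eqVneq y b;
    rewrite ?sqdistxx // => not_ab.
    rewrite q1b sqdist_Ne // q1x //.
    by apply: contraNneq not_ab => ->; rewrite !eqxx /= orbT.
  rewrite q1b sqdistC sqdist_Ne; first exact: sqdistC.
  rewrite q1x //.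
  by apply: contraNneq not_ab => ->; rewrite !eqxx.
- by rewrite q1a q1b sqdistxx ler01.
- by rewrite /q2 eqxx (negbTE ab) q1a sqdistC sqdist_Nee; lra.
Qed.

End HingeReduction.

Lemma exists_notin (T : finType) (s : seq T) : (size s < #|T|)%N -> exists x, x \notin s.
Proof.
move=> small; apply/existsP; move: small; apply: contraLR.
rewrite negb_exists -leqNgt => /forallP all_in.
apply: leq_trans (card_size s); apply/subset_leq_card/subsetP => x _.
by have := all_in x; rewrite negbK.
Qed.

Section CompleteGraph.
Variables (R : realType) (k : nat) (T : finType) (e : rel T) (u v : T).
Variables (eM : rel 'I_k.+3) (B : 'I_k.+3 -> {set T}) (a b : 'I_k.+3).
Hypotheses (e_sym : symmetric e) (uv_nonedge : ~~ e u v).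
Hypothesis model : induced_minor_model eM (add_edge e u v) B.
Hypotheses (u_in : u \in B a) (v_in : v \in B b) (ab : a != b).
Hypothesis f_only : forall x y, x \in B a -> y \in B b ->
  add_edge e u v x y -> (x == u) && (y == v).
Hypothesis eM_complete : forall x y, eM x y = (x != y).

Section Apex.
Variable c : 'I_k.+3.
Hypotheses (ca : c != a) (cb : c != b).

Let A := ~: [set a; c].

Let cardA : #|A| = k.+1.
Proof. by have := cardsC [set a; c]; rewrite cards2 eq_sym ca card_ord /A /=; lia. Qed.

Let bA : b \in A.
Proof. by rewrite !inE negb_or (eq_sym b a) (eq_sym b c) ab cb. Qed.

Let ev i : 'I_k.+3 := enum_val (cast_ord (esym cardA) i).
Let idx x : 'I_k.+1 := cast_ord cardA (enum_rank_in bA x).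

Let idxK : cancel ev idx.
Proof. by move=> i; rewrite /idx /ev enum_valK_in cast_ordKV. Qed.

Let evK : {in A, cancel idx ev}.
Proof. by move=> x xA; rewrite /ev /idx cast_ordK enum_rankK_in. Qed.

Let ev_neq i : (ev i != a) && (ev i != c).
Proof. by have := enum_valP (cast_ord (esym cardA) i); rewrite !inE negb_or. Qed.

Let q1 x : 'rV[R]_k.+1 := if x == c then 0 else 'e_(idx (if x == a then b else x)).

Let q1a : q1 a = 'e_(idx b).
Proof. by rewrite /q1 eq_sym (negbTE ca) eqxx. Qed.

Let q1ev i : q1 (ev i) = 'e_i.
Proof. by case/andP: (ev_neq i) => /negbTE ia /negbTE ic; rewrite /q1 ia ic idxK. Qed.

Lemma complete_placement_rigid q :
  congruent_on (del_edge eM a b) q q1 -> sqdist (q a) (q b) != 1.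
Proof.
move=> qq1.
have cong_off x y : x != y -> x != a -> y != a ->
    sqdist (q x) (q y) = sqdist (q1 x) (q1 y).
  move=> xy xa ya; apply: qq1.
  by rewrite /del_edge eM_complete xy (negbTE xa) (negbTE ya) andbF.
have cong_a x : x != a -> x != b -> sqdist (q a) (q x) = sqdist (q1 a) (q1 x).
  move=> xa xb; apply: qq1.
  by rewrite /del_edge eM_complete eq_sym xa eqxx (negbTE xb) (negbTE ab).
have q1c : q1 c = 0 by rewrite /q1 eqxx.
have -> : q b = (q \o ev) (idx b) by rewrite /= evK.
apply: (sqdist_frame_rigid (c := q c)) => [| i | i j ij | i ib] /=.
- by rewrite cong_a // q1a q1c sqdist_e0.
- by case/andP: (ev_neq i) => ia ic; rewrite cong_off // q1ev q1c sqdist_e0.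
- case/andP: (ev_neq i) => ia _; case/andP: (ev_neq j) => ja _.
  by rewrite cong_off ?q1ev ?sqdist_ee ?(can_eq idxK).
- have evb : ev i != b by apply: contra ib => /eqP <-; rewrite idxK.
  by case/andP: (ev_neq i) => ia _; rewrite cong_a // q1a q1ev sqdist_ee // eq_sym.
Qed.

Lemma complete_not_SIP_apex : ~ has_SIP R k.+1 e u v.
Proof.
apply: (not_SIP_of_flip e_sym uv_nonedge model u_in v_in ab f_only
  (q1 := q1) (j := idx b) q1a) (complete_placement_rigid).
  by rewrite /q1 if_same eq_sym (negbTE cb).
move=> x xa xb; rewrite /q1; case: eqP => [_|/eqP xc]; first by rewrite mxE.
rewrite (negbTE xa) mxE eqxx /=; case: eqP => // /(congr1 ev).
have xA : x \in A by rewrite !inE negb_or xa xc.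
by rewrite !evK // => xb'; move: xb; rewrite xb' eqxx.
Qed.

End Apex.

Lemma complete_not_SIP : ~ has_SIP R k.+1 e u v.
Proof.
have [c] : exists c, c \notin [:: a; b] by apply: exists_notin; rewrite card_ord.
by rewrite !inE negb_or => /andP[ca cb]; exact: (complete_not_SIP_apex ca cb).
Qed.

End CompleteGraph.

Lemma partner_subproof (i : 'I_6) : ((if odd i then i.-1 else i.+1) < 6)%N.
Proof. by case: i => [[|[|[|[|[|[|//]]]]]] ?]. Qed.

Definition partner (i : 'I_6) : 'I_6 := Ordinal (partner_subproof i).

Lemma partner_neq i : partner i != i.
Proof. by case: i => [[|[|[|[|[|[|//]]]]]] ?]. Qed.

Lemma same_pair (i j : 'I_6) : (i %/ 2 == j %/ 2)%N = (j == i) || (j == partner i).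
Proof. by case: i j => [[|[|[|[|[|[|//]]]]]] ?] [[|[|[|[|[|[|//]]]]]] ?]. Qed.

Lemma pair_partner i : (partner i %/ 2 = i %/ 2)%N.
Proof. by apply/eqP; rewrite eq_sym same_pair eqxx orbT. Qed.

Section Octahedron.
Variables (R : realType) (T : finType) (e : rel T) (u v : T).
Variables (eM : rel 'I_6) (B : 'I_6 -> {set T}) (a b : 'I_6).
Hypotheses (e_sym : symmetric e) (uv_nonedge : ~~ e u v).
Hypothesis model : induced_minor_model eM (add_edge e u v) B.
Hypotheses (u_in : u \in B a) (v_in : v \in B b) (ab : a != b).
Hypothesis f_only : forall x y, x \in B a -> y \in B b ->
  add_edge e u v x y -> (x == u) && (y == v).
Hypothesis eM_octahedron : forall x y, eM x y = (x != y) && (x %/ 2 != y %/ 2)%N.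

Let ab_pair : (a %/ 2 != b %/ 2)%N.
Proof.
have [_ _ _ _ edges] := model; have /(edges _ _ ab) : exists s t,
  [/\ s \in B a, t \in B b & add_edge e u v s t].
  by exists u, v; rewrite /add_edge !eqxx /= orbT.
by rewrite eM_octahedron => /andP[].
Qed.

Let neq_of_pair (x y : 'I_6) : (x %/ 2 != y %/ 2)%N -> x != y.
Proof. by apply: contraNneq => ->. Qed.

Section ThirdPair.
Variable c : 'I_6.
Hypotheses (ca_pair : (c %/ 2 != a %/ 2)%N) (cb_pair : (c %/ 2 != b %/ 2)%N).

Let q1 (x : 'I_6) : 'rV[R]_3 :=
  if (x %/ 2 == a %/ 2)%N then (if x == a then 'e_1 else - 'e_2)
  else if (x %/ 2 == b %/ 2)%N then (if x == b then 'e_1 else 'e_2)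
  else if x == c then 0 else 'e_0.

Let q1a : q1 a = 'e_1.
Proof. by rewrite /q1 !eqxx. Qed.

Let q1b : q1 b = 'e_1.
Proof. by rewrite /q1 eq_sym (negbTE ab_pair) !eqxx. Qed.

Let q1a' : q1 (partner a) = - 'e_2.
Proof. by rewrite /q1 pair_partner eqxx ifN // partner_neq. Qed.

Let q1b' : q1 (partner b) = 'e_2.
Proof. by rewrite /q1 pair_partner eq_sym (negbTE ab_pair) eqxx ifN // partner_neq. Qed.

Let q1c : q1 c = 0.
Proof. by rewrite /q1 (negbTE ca_pair) (negbTE cb_pair) eqxx. Qed.

Let q1c' : q1 (partner c) = 'e_0.
Proof. by rewrite /q1 pair_partner (negbTE ca_pair) (negbTE cb_pair) ifN // partner_neq. Qed.

Lemma octahedron_placement_rigid q :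
  congruent_on (del_edge eM a b) q q1 -> sqdist (q a) (q b) != 1.
Proof.
move=> qq1.
have cong (x y : 'I_6) : (x %/ 2 != y %/ 2)%N ->
    (x \notin [:: a; b]) || (y \notin [:: a; b]) ->
    sqdist (q x) (q y) = sqdist (q1 x) (q1 y).
  move=> xy xy_ab; apply: qq1; rewrite /del_edge eM_octahedron xy neq_of_pair //=.
  by case/orP: xy_ab; rewrite !inE => /norP[/negbTE-> /negbTE->]; rewrite ?andbF.
have notin_ab (x : 'I_6) : (x %/ 2 != a %/ 2)%N -> (x %/ 2 != b %/ 2)%N -> x \notin [:: a; b].
  by move=> xa xb; rewrite !inE negb_or !neq_of_pair.
have ba_pair := ab_pair; rewrite eq_sym in ba_pair.
have ac_pair := ca_pair; rewrite eq_sym in ac_pair.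
have bc_pair := cb_pair; rewrite eq_sym in bc_pair.
have c_ab := notin_ab c ca_pair cb_pair.
have c'_ab : partner c \notin [:: a; b] by rewrite notin_ab ?pair_partner.
have a'_ab : partner a \notin [:: a; b].
  by rewrite !inE negb_or partner_neq neq_of_pair // pair_partner.
have b'_ab : partner b \notin [:: a; b].
  by rewrite !inE negb_or partner_neq neq_of_pair // pair_partner.
apply: (@octahedron_rigid _ _ _ (q (partner a)) (q (partner b)) (q c) (q (partner c)));
  rewrite cong ?pair_partner ?c_ab ?c'_ab ?a'_ab ?b'_ab ?orbT //
    ?q1a ?q1b ?q1a' ?q1b' ?q1c ?q1c' ?sqdist_Nee ?sqdist_Ne ?sqdist_e0 ?sqdist_ee //;
  by rewrite !mxE.
Qed.

Lemma octahedron_not_SIP_third_pair : ~ has_SIP R 3 e u v.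
Proof.
apply: (not_SIP_of_flip e_sym uv_nonedge model u_in v_in ab f_only
  (q1 := q1) (j := 1) q1a q1b) (octahedron_placement_rigid).
move=> x xa xb; rewrite /q1 (negbTE xa) (negbTE xb) /=.
by case: ifP => _; [|case: ifP => _; [|case: ifP => _]]; rewrite !mxE ?mulr0n ?oppr0.
Qed.

End ThirdPair.

Lemma octahedron_not_SIP : ~ has_SIP R 3 e u v.
Proof.
have [c] : exists c, c \notin [:: a; b; partner a; partner b].
  by apply: exists_notin; rewrite card_ord.
rewrite !inE !negb_or => /and4P[ca cb ca' cb'].
apply: (@octahedron_not_SIP_third_pair c).
  by rewrite eq_sym same_pair negb_or ca.
by rewrite eq_sym same_pair negb_or cb.
Qed.

End Octahedron.

Theorem mainTheorem10 (R : realType) (d : nat) (T : finType) (e : rel T) (u v : T) :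
  (d \in [:: 1%N; 2%N; 3%N]) ->
  symmetric e -> irreflexive e ->
  u != v -> ~~ e u v ->
  (exists (n : nat) (eM : rel 'I_n) (B : 'I_n -> {set T}) (a b : 'I_n),
      [/\ d_forbidden d eM,
          induced_minor_model eM (add_edge e u v) B,
          [/\ u \in B a, v \in B b & a != b] &
          (forall x y, x \in B a -> y \in B b -> add_edge e u v x y ->
             (x == u) && (y == v))]) ->
  ~ has_SIP R d e u v.
Proof.
(* The range of [d] is implied by [d_forbidden]. *)
move=> _ e_sym _ _ uv_nonedge [n [eM [B [a [b [forbidden model [u_in v_in ab] f_only]]]]]].
case: forbidden => [[dE nE eM_K] | [dE nE eM_K] | [dE nE eM_K] | [dE nE eM_octa]];
  subst d n.
- exact: (complete_not_SIP (k := 0) e_sym uv_nonedge model u_in v_in ab f_only eM_K).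
- exact: (complete_not_SIP (k := 1) e_sym uv_nonedge model u_in v_in ab f_only eM_K).
- exact: (complete_not_SIP (k := 2) e_sym uv_nonedge model u_in v_in ab f_only eM_K).
- exact: (octahedron_not_SIP e_sym uv_nonedge model u_in v_in ab f_only eM_octa).
Qed.
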